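(* Let $\kappa$ be an infinite cardinal and let $(\mathcal U_\xi)_{\xi\in\kappa}$ be a family of non-principal ultrafilters on $\kappa$. Then there exists $X\subseteq\kappa$ with $|X|=\kappa$ such that $X\notin\mathcal U_\xi$ for every $\xi\in X$. *)

From HB Require Import structures.
From mathcomp Require Import all_boot.
From mathcomp Require Import boolp classical_sets functions cardinality.
Set Implicit Arguments. Unset Strict Implicit. Unset Printing Implicit Defensive.
Local Open Scope classical_set_scope.

Definition is_ultrafilter {T : Type} (U : set (set T)) : Prop :=
  [/\ U setT,
      ~ U set0,
      (forall A B : set T, U A -> U B -> U (A `&` B)),
      (forall A B : set T, A `<=` B -> U A -> U B)
    & (forall A : set T, U A \/ U (~` A))].

(* Non-principal: no singleton belongs to U (for an ultrafilter this is
   equivalent to not being generated by a point). *)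
Definition is_nonprincipal_ultrafilter {T : Type} (U : set (set T)) : Prop :=
  is_ultrafilter U /\ (forall x : T, ~ U [set x]).

From HB Require Import structures.
From mathcomp Require Import all_boot.
From mathcomp Require Import boolp classical_sets functions cardinality.
Set Implicit Arguments. Unset Strict Implicit. Unset Printing Implicit Defensive.
Local Open Scope classical_set_scope.
Local Open Scope card_scope.

(* Since |T * T| = |T|, split T into |T| disjoint pieces Y_a of size |T|.  If
   some Y_a lies in no U_xi with xi in Y_a, take X = Y_a.  Otherwise pick for
   every a some xi_a in Y_a with Y_a in U_(xi_a); then X = {xi_a | a} meets Y_a
   only in xi_a, so X is not in U_(xi_a) by non-principality.

   |T * T| = |T| (Hessenberg) comes from Zorn's lemma applied to graphs of
   injections D * D -> D.  A maximal one admits no injection h : D -> T \ D,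
   which would let it grow to D u h(D); so by comparability of cardinals T \ D
   injects into D, and tagging D and T \ D with two distinct elements of D
   embeds T, hence T * T, into D. *)

Lemma chain_bigcup2 {T : Type} {F : set (set T)} {x y : T} : total_on F subset ->
  (\bigcup_(A in F) A) x -> (\bigcup_(A in F) A) y ->
  exists2 A, F A & A x /\ A y.
Proof.
move=> Ftot [A FA Ax] [B FB By].
have [AB|BA] := Ftot _ _ FA FB; first by exists B => //; split => //; apply: AB.
by exists A => //; split => //; apply: BA.
Qed.

Section injective_on_sets.
Context {aT rT : Type}.
Implicit Types (A B : set aT) (f : aT -> rT).

Lemma set_injU A B f : {in A &, injective f} -> {in B &, injective f} ->
  (forall a b, A a -> B b -> f a <> f b) -> {in A `|` B &, injective f}.
Proof.
move=> fA fB AB x y /set_mem[Ax|Bx] /set_mem[Ay|By] fxy.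
- exact: fA (mem_set Ax) (mem_set Ay) fxy.
- by case: (AB _ _ Ax By).
- by case: (AB _ _ Ay Bx).
- exact: fB (mem_set Bx) (mem_set By) fxy.
Qed.

Lemma chain_bigcup_inj (F : set (set aT)) f : total_on F subset ->
  (forall A, F A -> {in A &, injective f}) ->
  {in \bigcup_(A in F) A &, injective f}.
Proof.
move=> Ftot Finj x y /set_mem Fx /set_mem Fy.
have [A FA [Ax Ay]] := chain_bigcup2 Ftot Fx Fy.
exact: Finj _ FA _ _ (mem_set Ax) (mem_set Ay).
Qed.

Lemma image_pair_inj_fst (pT qT : Type) (S : set aT) (p : aT -> pT) (q : aT -> qT) :
  {in S &, injective p} -> {in [set (p t, q t) | t in S] &, injective fst}.
Proof.
move=> p_inj _ _ /set_mem[s Ss <-] /set_mem[t St <-] /= pst.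
by rewrite (p_inj s t) ?inE.
Qed.

Lemma image_pair_inj_snd (pT qT : Type) (S : set aT) (p : aT -> pT) (q : aT -> qT) :
  {in S &, injective q} -> {in [set (p t, q t) | t in S] &, injective snd}.
Proof.
move=> q_inj _ _ /set_mem[s Ss <-] /set_mem[t St <-] /= qst.
by rewrite (q_inj s t) ?inE.
Qed.

End injective_on_sets.

Lemma card_eq_graph {T U : Type} {G : set (T * U)} :
  {in G &, injective fst} -> {in G &, injective snd} -> fst @` G #= snd @` G.
Proof. by move=> /inj_card_eq G1 /inj_card_eq/card_esym G2; apply: card_eq_trans G2. Qed.

Lemma card_le_total (T U : Type) (A : set T) (B : set U) : A #<= B \/ B #<= A.
Proof.
pose P (G : set (T * U)) :=
  [/\ G `<=` A `*` B, {in G &, injective fst} & {in G &, injective snd}].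
have [M [[MAB M1 M2] Mmax]] : exists M, P M /\ forall G, M `<` G -> ~ P G.
  apply: Zorn_bigcup => F FP Ftot; split.
  - by move=> p [G /FP[GAB _ _]]; apply: GAB.
  - by apply: chain_bigcup_inj => // G /FP[].
  - by apply: chain_bigcup_inj => // G /FP[].
have MA : fst @` M `<=` A by move=> _ [p /MAB[? _] <-].
have MB : snd @` M `<=` B by move=> _ [p /MAB[_ ?] <-].
have /card_eqPle[MM MM'] := card_eq_graph M1 M2.
have [AM|/existsNP[x /not_implyP[Ax xM]]] := pselect (A `<=` fst @` M).
  left; apply: card_le_trans (subset_card_le AM) _.
  exact: card_le_trans MM (subset_card_le MB).
have [BM|/existsNP[y /not_implyP[By yM]]] := pselect (B `<=` snd @` M).
  right; apply: card_le_trans (subset_card_le BM) _.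
  exact: card_le_trans MM' (subset_card_le MA).
have Mxy : M `<` M `|` [set (x, y)].
  split; first exact: subsetUl.
  by move=> /(_ (x, y) (or_intror erefl)) Mxy; apply: xM; exists (x, y).
case: (Mmax _ Mxy); split.
- by move=> p [/MAB //|->].
- apply: set_injU => //; first by move=> ? ? /[!in_setE] -> ->.
  by move=> p _ Mp -> /= px; apply: xM; exists p.
- apply: set_injU => //; first by move=> ? ? /[!in_setE] -> ->.
  by move=> p _ Mp -> /= py; apply: yM; exists p.
Qed.

Lemma card_le_inj (T : Type) (A B : set T) :
  A #<= B -> exists2 f : T -> T, set_fun A B f & set_inj A f.
Proof.
elim/Ppointed: T => T in A B *; last by move=> /pcard_leP/injfunPex.
by rewrite !emptyE => _; exists id.
Qed.

(* [b0] is a junk value outside the domain of [G]. *)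
Definition graph_fun {A B : Type} (b0 : B) (G : set (A * B)) (x : A) : B :=
  if pselect (exists y, G (x, y)) is left H then projT1 (cid H) else b0.

Lemma graph_funP {A B : Type} (b0 : B) (G : set (A * B)) x :
  (exists y, G (x, y)) -> G (x, graph_fun b0 G x).
Proof. by rewrite /graph_fun; case: pselect => // H _; exact: projT2 (cid H). Qed.

Section pairing.
Variables (T : Type) (e : nat -> T).
Hypothesis e_inj : injective e.

Definition pairing_dom (G : set ((T * T) * T)) : set T :=
  [set x | exists z, G ((x, x), z)].

(* [G] is the graph of an injection [pairing_dom G * pairing_dom G -> pairing_dom G];
   the last clause puts the range of [e] inside every nonempty such graph, to
   supply the distinct tags [e i] used below. *)
Definition pairing_graph (G : set ((T * T) * T)) : Prop :=
  [/\ {in G &, injective fst}, {in G &, injective snd},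
      (forall x y, (exists z, G ((x, y), z)) <-> pairing_dom G x /\ pairing_dom G y),
      snd @` G `<=` pairing_dom G &
      G !=set0 -> range e `<=` pairing_dom G].

Lemma pairing_dom_sub (G H : set ((T * T) * T)) :
  G `<=` H -> pairing_dom G `<=` pairing_dom H.
Proof. by move=> GH x [z Gz]; exists z; apply: GH. Qed.

Lemma chain_pairing_graph (F : set (set ((T * T) * T))) :
  F `<=` pairing_graph -> total_on F subset ->
  pairing_graph (\bigcup_(G in F) G).
Proof.
move=> FP Ftot; set H := \bigcup_(G in F) G.
have GH G : F G -> G `<=` H by move=> FG p Gp; exists G.
split.
- by apply: chain_bigcup_inj => // G /FP[].
- by apply: chain_bigcup_inj => // G /FP[].
- move=> x y; split.
    move=> [z [G FG Gz]]; have [_ _ Gdom _ _] := FP _ FG.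
    have [Gx Gy] := (Gdom x y).1 (ex_intro _ z Gz).
    by split; apply: pairing_dom_sub (GH _ FG) _ _.
  move=> [[z1 Hx] [z2 Hy]]; have [G FG [Gx Gy]] := chain_bigcup2 Ftot Hx Hy.
  have [_ _ Gdom _ _] := FP _ FG.
  have [z Gz] := (Gdom x y).2 (conj (ex_intro _ z1 Gx) (ex_intro _ z2 Gy)).
  by exists z; apply: GH FG _ _.
- move=> _ [p [G FG Gp] <-]; have [_ _ _ Gran _] := FP _ FG.
  by apply: pairing_dom_sub (GH _ FG) _ _; apply: Gran; exists p.
- move=> [p [G FG Gp]] _ [i _ <-]; have [_ _ _ _ Ge] := FP _ FG.
  by apply: pairing_dom_sub (GH _ FG) _ _; apply: Ge; [exists p | exists i].
Qed.

Lemma pairing_graph_nat :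
  pairing_graph [set ((e p.1, e p.2), e (pickle p)) | p in [set: nat * nat]].
Proof.
set G := [set _ | _ in _].
have domG : pairing_dom G = range e.
  apply/seteqP; split=> [x [z [p _ [<- _ _]]] | _ [i _ <-]]; first by exists p.1.
  by exists (e (pickle (i, i))), (i, i).
split; rewrite ?domG.
- by apply: image_pair_inj_fst => -[i j] [i' j'] _ _ [/e_inj -> /e_inj ->].
- by apply: image_pair_inj_snd => p q _ _ /e_inj; apply: (pcan_inj pickleK).
- move=> x y; split=> [[z [p _ [<- <- _]]]|[[i _ <-] [j _ <-]]].
    by split; [exists p.1 | exists p.2].
  by exists (e (pickle (i, j))), (i, j).
- by move=> _ [_ [p _ <-] <-]; exists (pickle p).
- by move=> _; exact: subset_refl.
Qed.

Section pairing_fun.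
Variable M : set ((T * T) * T).
Hypothesis M_pairing : pairing_graph M.
Local Notation D := (pairing_dom M).
Local Notation f := (graph_fun (e 0) M).

Lemma pairing_graph_dom {p z} : M (p, z) -> D p.1 /\ D p.2.
Proof.
by case: p => x y Mxy; have [_ _ Mdom _ _] := M_pairing; apply/Mdom; exists z.
Qed.

Lemma pairing_graph_fun {x y} : D x -> D y -> M ((x, y), f (x, y)).
Proof.
by move=> Dx Dy; apply: graph_funP; have [_ _ Mdom _ _] := M_pairing; apply/Mdom.
Qed.

Lemma pairing_fun_dom {x y} : D x -> D y -> D (f (x, y)).
Proof.
move=> Dx Dy; have [_ _ _ Mran _] := M_pairing.
by apply: Mran; exists ((x, y), f (x, y)); first exact: pairing_graph_fun.
Qed.

Lemma pairing_fun_inj {x y x' y'} : D x -> D y -> D x' -> D y' ->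
  f (x, y) = f (x', y') -> (x, y) = (x', y').
Proof.
move=> Dx Dy Dx' Dy' fE; have [_ Msnd _ _ _] := M_pairing.
have Mxy := mem_set (pairing_graph_fun Dx Dy).
by case: (Msnd _ _ Mxy (mem_set (pairing_graph_fun Dx' Dy')) fE) => -> ->.
Qed.

Hypothesis M_neq0 : M !=set0.

Lemma pairing_dom_e i : D (e i).
Proof. by have [_ _ _ _ Me] := M_pairing; apply: Me => //; exists i. Qed.

(* The domain grows to [E = D u h(D)]: the block [shift b1 D * shift b2 D] of
   [E * E], for [(b1, b2) != (false, false)], is sent into [h(D)] with the tag
   [e (pickle (b1, b2))]. *)
Section extension.
Variable h : T -> T.
Hypotheses (h_out : set_fun D (~` D) h) (h_inj : set_inj D h).

Let shift (b : bool) x := if b then h x else x.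
Let E := [set shift b a | b in [set: bool] & a in D].
Let S := [set t : (bool * bool) * (T * T) | [/\ t.1 != (false, false), D t.2.1 & D t.2.2]].
Let pos (t : (bool * bool) * (T * T)) := (shift t.1.1 t.2.1, shift t.1.2 t.2.2).
Let val (t : (bool * bool) * (T * T)) := h (f (f t.2, e (pickle t.1))).
Let B := M `|` [set (pos t, val t) | t in S].

Let E_dom x : D x -> E x.
Proof. by move=> Dx; exists false => //; exists x. Qed.

Let shift_dom {b a} : D a -> D (shift b a) -> b = false.
Proof. by case: b => //= Da /(h_out Da). Qed.

Let shift_inj {b b' a a'} : D a -> D a' -> shift b a = shift b' a' -> b = b' /\ a = a'.
Proof.
move=> Da Da'; case: b; case: b' => //= ab.
- by split => //; apply: h_inj; rewrite ?inE.
- by exfalso; apply: (h_out Da); rewrite ab.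
- by exfalso; apply: (h_out Da'); rewrite -ab.
Qed.

Let val_dom_out {t} : S t -> ~ D (val t).
Proof.
case: t => -[b1 b2] [a1 a2] [_ Da1 Da2]; apply: h_out.
by apply: pairing_fun_dom; [apply: pairing_fun_dom | apply: pairing_dom_e].
Qed.

Let pos_dom_out {t} : S t -> ~ (D (pos t).1 /\ D (pos t).2).
Proof.
case: t => -[b1 b2] [a1 a2] [/= b12 Da1 Da2] [/(shift_dom Da1) b1F /(shift_dom Da2) b2F].
by move: b12; rewrite b1F b2F.
Qed.

Let pos_inj : {in S &, injective pos}.
Proof.
move=> [[b1 b2] [a1 a2]] [[b1' b2'] [a1' a2']] /set_mem[_ /= Da1 Da2] /set_mem[_ /= Da1' Da2'].
by case=> /(shift_inj Da1 Da1')[-> ->] /(shift_inj Da2 Da2')[-> ->].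
Qed.

Let val_inj : {in S &, injective val}.
Proof.
move=> [b [a1 a2]] [b' [a1' a2']] /set_mem[_ /= Da1 Da2] /set_mem[_ /= Da1' Da2'] /=.
have fD := pairing_fun_dom Da1 Da2; have fD' := pairing_fun_dom Da1' Da2'.
have eD := pairing_dom_e.
move=> /h_inj; rewrite !inE => /(_ (pairing_fun_dom fD (eD _)) (pairing_fun_dom fD' (eD _))).
case/(pairing_fun_inj fD (eD _) fD' (eD _)) => /(pairing_fun_inj Da1 Da2 Da1' Da2')[-> ->].
by move=> /e_inj/(pcan_inj pickleK) ->.
Qed.

Let B_dom x y : (exists z, B ((x, y), z)) <-> E x /\ E y.
Proof.
split=> [[z [/pairing_graph_dom[Dx Dy] | [[[b1 b2] [a1 a2]] [_ /= Da1 Da2] [<- <- _]]]] | ].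
- by split; apply: E_dom.
- by split; [exists b1 => //; exists a1 | exists b2 => //; exists a2].
move=> [[b1 _ [a1 Da1 <-]] [b2 _ [a2 Da2 <-]]].
have [[-> ->]|b12] := eqVneq (b1, b2) (false, false).
  by exists (f (a1, a2)); left; apply: pairing_graph_fun.
by exists (val ((b1, b2), (a1, a2))); right; exists ((b1, b2), (a1, a2)).
Qed.

Let pairing_dom_B : pairing_dom B = E.
Proof.
apply/seteqP; split=> x; first by move=> /(B_dom x x)[].
by move=> Ex; apply/(B_dom x x).
Qed.

Lemma pairing_graph_extend : exists2 B, M `<` B & pairing_graph B.
Proof.
exists B.
  split; first exact: subsetUl.
  pose t0 := ((true, true), (e 0, e 0)).
  have St0 : S t0 := And3 isT (pairing_dom_e 0) (pairing_dom_e 0).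
  move=> /(_ (pos t0, val t0) (or_intror (ex_intro2 _ _ t0 St0 erefl))).
  by move=> /pairing_graph_dom; apply: pos_dom_out.
have [Mfst Msnd _ Mran _] := M_pairing.
split; rewrite ?pairing_dom_B.
- apply: set_injU => //; first exact: image_pair_inj_fst.
  move=> [p z] _ Mpz [t St <-] /= pt; apply: (pos_dom_out St).
  by rewrite -pt; apply: pairing_graph_dom Mpz.
- apply: set_injU => //; first exact: image_pair_inj_snd.
  move=> [p z] _ Mpz [t St <-] /= zt; apply: (val_dom_out St).
  by rewrite -zt; apply: Mran; exists (p, z).
- by move=> x y; rewrite B_dom.
- move=> _ [[p z] [Mpz | [t St [_ <-]]] <-] /=.
    by apply: E_dom; apply: Mran; exists (p, z).
  case: t St => -[b1 b2] [a1 a2] [_ Da1 Da2]; exists true => //.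
  exists (f (f (a1, a2), e (pickle (b1, b2)))) => //.
  by apply: pairing_fun_dom; [apply: pairing_fun_dom | apply: pairing_dom_e].
- by move=> _ _ [i _ <-]; apply: E_dom; apply: pairing_dom_e.
Qed.

End extension.

Lemma pairing_inj_of_card_leC : ~` D #<= D -> exists g : T * T -> T, injective g.
Proof.
move=> /card_le_inj[j j_out j_inj].
pose m x := if pselect (D x) then f (x, e 0) else f (j x, e 1).
have m_dom x : D (m x).
  rewrite /m; case: pselect => Dx; first exact: pairing_fun_dom Dx (pairing_dom_e 0).
  exact: pairing_fun_dom (j_out _ Dx) (pairing_dom_e 1).
have m_inj : injective m.
  move=> x y; rewrite /m; case: pselect => Dx; case: pselect => Dy.
  - by case/(pairing_fun_inj Dx (pairing_dom_e 0) Dy (pairing_dom_e 0)).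
  - by case/(pairing_fun_inj Dx (pairing_dom_e 0) (j_out _ Dy) (pairing_dom_e 1)) => _ /e_inj.
  - by case/(pairing_fun_inj (j_out _ Dx) (pairing_dom_e 1) Dy (pairing_dom_e 0)) => _ /e_inj.
  - case/(pairing_fun_inj (j_out _ Dx) (pairing_dom_e 1) (j_out _ Dy) (pairing_dom_e 1)).
    by move=> jxy; exact: j_inj (mem_set Dx) (mem_set Dy) jxy.
exists (fun p => f (m p.1, m p.2)) => -[x y] [x' y'] /=.
by case/(pairing_fun_inj (m_dom x) (m_dom y) (m_dom x') (m_dom y')) => /m_inj -> /m_inj ->.
Qed.

End pairing_fun.
End pairing.

Lemma infinite_pairing (T : Type) :
  infinite_set [set: T] -> exists g : T * T -> T, injective g.
Proof.
elim/Ppointed: T => T; first by rewrite emptyE => /(_ (finite_set0 _)).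
move=> /infiniteP/pcard_injP[e /in2TT e_inj].
have [M [M_pairing M_max]] :
    exists M, pairing_graph e M /\ forall B, M `<` B -> ~ pairing_graph e B.
  exact: Zorn_bigcup (@chain_pairing_graph _ e).
have M_neq0 : M !=set0.
  apply/set0P/negP => /eqP M0; apply: (M_max _ _ (pairing_graph_nat e_inj)).
  rewrite M0; split=> // /(_ ((e 0, e 0), e (pickle (0, 0)))).
  by apply; exists (0, 0).
have [/card_le_inj[h h_out h_inj]|] := card_le_total (pairing_dom M) (~` pairing_dom M).
  have [B MB PB] := pairing_graph_extend e_inj M_pairing M_neq0 h_out h_inj.
  by case: (M_max _ MB PB).
by move/(pairing_inj_of_card_leC e_inj M_pairing M_neq0).
Qed.

Lemma nonprincipal_setI_sub1 (T : Type) (U : set (set T)) (X Y : set T) (x : T) :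
  is_nonprincipal_ultrafilter U -> X `&` Y `<=` [set x] -> U X -> ~ U Y.
Proof.
move=> [[_ _ UI Usub _] U1] XY UX UY.
by apply: (U1 x); apply: Usub XY (UI _ _ UX UY).
Qed.

Theorem theorem3 (T : Type) (hinf : infinite_set [set: T])
    (U : T -> set (set T))
    (hU : forall xi : T, is_nonprincipal_ultrafilter (U xi)) :
  exists X : set T, X #= [set: T] /\ (forall xi : T, X xi -> ~ U xi X).
Proof.
have [g g_inj] := infinite_pairing hinf.
pose Y a := [set g (a, b) | b in [set: T]].
have Y_card a : Y a #= [set: T] by apply: inj_card_eq => b c _ _ /g_inj[].
have Y_disj a a' z : Y a z -> Y a' z -> a = a' by move=> [b _ <-] [c _] /g_inj[].
have [[a Ya]|/forallNP noY] := pselect (exists a, forall xi, Y a xi -> ~ U xi (Y a)).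
  by exists (Y a).
have /choice[b Yb] : forall a, exists xi, Y a xi /\ U xi (Y a).
  move=> a; apply: contrapT => nxi; apply: (noY a) => xi Yxi Uxi.
  by apply: nxi; exists xi.
exists (b @` [set: T]); split.
  apply: inj_card_eq => a a' _ _ ba.
  by apply: (Y_disj _ _ (b a)); [case: (Yb a) | rewrite ba; case: (Yb a')].
move=> _ [a _ <-] UX; have [_ UY] := Yb a.
apply: (nonprincipal_setI_sub1 (hU (b a)) _ UX UY) => _ [[a' _ <-] Ya'].
by rewrite (Y_disj _ _ _ (Yb a').1 Ya').
Qed.
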